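(* Consider the rested multiarmed bandit model with $K$ arms and $M$ plays per slot described in the context, and assume all arms are finite-state, irreducible, aperiodic, rested Markov chains. Then under UCB-M (with any exploration constant $L>0$) there is a constant $C_{\mathbf{S,P,r}}$ depending on the state spaces, rewards and transition probabilities of the arms but not on time, such that for all $n$ $$\Big|R(n)-\Big(n\sum_{j=1}^M \mu^{j}- \sum_{i=1}^K \mu^i E[T^i(n)]\Big)\Big| \leq C_{\mathbf{S,P,r}}.$$
   Context: Model: There are $K$ arms indexed by $i\in\{1,\dots,K\}$. Arm $i$ is a discrete-time Markov chain on a finite state space $S^i$ with transition matrix $P^i$ and stationary distribution $\pi^i=(\pi^i_x)$; each state $x\in S^i$ carries a reward $r^i_x$. The arms are mutually independent. Time is slotted; in each slot $t$ the player selects a set $A(t)$ of exactly $M$ arms ($1\le M\le K$), observes their states and collects the sum of their rewards. In the rested model, an arm's state makes one transition according to $P^i$ each time it is played and stays frozen otherwise. The mean reward of arm $i$ is $\mu^i=\sum_{x}r^i_x\pi^i_x$, with arms indexed so that $\mu^1\ge\dots\ge\mu^M>\mu^{M+1}\ge\dots\ge\mu^K$. The regret up to time $n$ is $R(n)=n\sum_{j=1}^M\mu^j-E\big[\sum_{t=1}^n\sum_{i\in A(t)} r^i_{x^i(t)}\big]$, where $x^i(t)$ is the observed state of arm $i$ in slot $t$. $T^i(n)$ denotes the total number of slots up to the end of slot $n$ in which arm $i$ is played. UCB-M with exploration constant $L>0$: in the first $K$ slots every arm is played exactly $M$ times ($M$ distinct arms per slot). For $t\ge K$, with $\bar r^i(T^i(t))$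 the sample mean of rewards from the $T^i(t)$ plays of arm $i$, compute $g^i_{t,T^i(t)}=\bar r^i(T^i(t))+\sqrt{L\ln t/T^i(t)}$ and in slot $t+1$ play the $M$ arms with the highest indices. *)

From HB Require Import structures.
From mathcomp Require Import all_boot all_order all_algebra.
From mathcomp Require Import reals exp.
Set Implicit Arguments. Unset Strict Implicit. Unset Printing Implicit Defensive.
Import Order.TTheory GRing.Theory Num.Theory.
Local Open Scope ring_scope.

Section MarkovChains.
Variable R : realType.

Definition stochastic (S : finType) (P : S -> S -> R) : Prop :=
  (forall x y, 0 <= P x y) /\ (forall x, \sum_y P x y = 1).

Definition distribution (S : finType) (p : S -> R) : Prop :=
  (forall x, 0 <= p x) /\ \sum_x p x = 1.

Fixpoint mpow (S : finType) (P : S -> S -> R) (k : nat) : S -> S -> R :=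
  match k with
  | 0 => fun x y => (x == y)%:R
  | k.+1 => fun x y => \sum_z mpow P k x z * P z y
  end.

Definition irreducible (S : finType) (P : S -> S -> R) : Prop :=
  forall x y, exists k, 0 < mpow P k x y.

Definition aperiodic (S : finType) (P : S -> S -> R) : Prop :=
  forall x (d : nat),
    (forall k : nat, (0 < k)%N -> 0 < mpow P k x x -> (d %| k)%N) -> d = 1%N.

Definition stationary (S : finType) (P : S -> S -> R) (pi : S -> R) : Prop :=
  distribution pi /\ (forall y, \sum_x pi x * P x y = pi y).

Definition mean_reward (S : finType) (r : S -> R) (pi : S -> R) : R :=
  \sum_x r x * pi x.

End MarkovChains.

Section Bandit.
Variable R : realType.
Variable K : nat.
Variable S : 'I_K -> finType.

(** A selection rule: given the number [t] of completed slots, the play counts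
    [T i] and the reward sums [Sm i] of each arm, the set of arms played in
    slot [t+1]. *)
Definition selector := nat -> ('I_K -> nat) -> ('I_K -> R) -> {set 'I_K}.

Definition ucb_index (L : R) (t : nat) (T : 'I_K -> nat) (Sm : 'I_K -> R)
  (i : 'I_K) : R :=
  Sm i / (T i)%:R + Num.sqrt (L * ln (t%:R) / (T i)%:R).

(** [sel] implements UCB-M with exploration constant [L]: in the first K
    slots it follows the fixed schedule [sched] (M distinct arms per slot,
    every arm played exactly M times); afterwards (t >= K) it plays M arms
    with highest indices (ties broken arbitrarily by [sel]). *)
Definition is_UCB_M (M : nat) (L : R) (sched : 'I_K -> {set 'I_K})
  (sel : selector) : Prop :=
  [/\ (forall s : 'I_K, #|sched s| = M),
      (forall i : 'I_K, #|[set s : 'I_K | i \in sched s]| = M),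
      (forall (s : 'I_K) T Sm, sel (nat_of_ord s) T Sm = sched s) &
      (forall (t : nat) T Sm, (K <= t)%N -> (forall i, (0 < T i)%N) ->
         #|sel t T Sm| = M /\
         (forall i j, i \in sel t T Sm -> j \notin sel t T Sm ->
            ucb_index L t T Sm j <= ucb_index L t T Sm i))].

(** Rested model: arm [i]'s k-th play (k = 0,1,...) observes state [w i k] of
    its own Markov chain.  [run] returns, after [t] slots, the play counts
    T^i(t), the reward sums of each arm, and the total collected reward. *)
Fixpoint run (sel : selector) (r : forall i, S i -> R)
  (w : forall i, nat -> S i) (t : nat) :
  ('I_K -> nat) * ('I_K -> R) * R :=
  match t with
  | 0 => (fun _ => 0%N, fun _ => 0, 0)
  | t.+1 =>
    let: (T, Sm, tot) := run sel r w t in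
    let A := sel t T Sm in
    (fun i => (T i + (i \in A))%N,
     fun i => Sm i + (if i \in A then r i (w i (T i)) else 0),
     tot + \sum_(i in A) r i (w i (T i)))
  end.

Definition Omega (n : nat) := {dffun forall i : 'I_K, {ffun 'I_n.+1 -> S i}}.

Definition path_of n (w : Omega n) : forall i, nat -> S i :=
  fun i k => w i (inord k).

Definition path_prob (Si : finType) (init : Si -> R) (P : Si -> Si -> R) n
  (x : {ffun 'I_n.+1 -> Si}) : R :=
  init (x ord0) * \prod_(k < n) P (x (inord k)) (x (inord k.+1)).

(** Arms are independent. *)
Definition joint_prob (init : forall i, S i -> R)
  (P : forall i, S i -> S i -> R) n (w : Omega n) : R :=
  \prod_(i < K) path_prob (init i) (P i) (w i).

Definition expect (init : forall i, S i -> R) (P : forall i, S i -> S i -> R)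
  n (f : Omega n -> R) : R :=
  \sum_(w : Omega n) joint_prob init P w * f w.

Definition plays (sel : selector) (r : forall i, S i -> R) n (i : 'I_K)
  (w : Omega n) : R := ((run sel r (path_of w) n).1.1 i)%:R.

Definition total_reward (sel : selector) (r : forall i, S i -> R) n
  (w : Omega n) : R := (run sel r (path_of w) n).2.

Definition regret (M : nat) (mu : 'I_K -> R) (init : forall i, S i -> R)
  (P : forall i, S i -> S i -> R) (sel : selector) (r : forall i, S i -> R)
  (n : nat) : R :=
  n%:R * (\sum_(j < K | (j < M)%N) mu j) - expect init P (total_reward sel r (n:=n)).

End Bandit.

(* Irreducibility makes the harmonic functions of a stochastic matrix P
   constant, so I - P has rank |S| - 1 and maps onto the functions of mean
   zero under the stationary law pi: the Poisson equation h - P h = r - mu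
   is solvable.  Along the successive states x_0, x_1, ... of arm i, the
   reward of its first T plays minus mu T then telescopes into
   h(x_0) - h(x_T) plus the sum over k < T of the martingale increments
   h(x_(k+1)) - (P h)(x_k).  The event {k < T^i(n)} only depends on the first
   k+1 states of arm i and on the other arms, so every increment has mean
   zero and the gap is at most 2 sum_i sum_x |h_i(x)|. *)

From HB Require Import structures.
From mathcomp Require Import all_boot all_order all_algebra.
From mathcomp Require Import reals exp.
From mathcomp Require Import zify ring.
From Stdlib Require Import FunctionalExtensionality.
Import Order.TTheory GRing.Theory Num.Theory.
Local Open Scope ring_scope.

Lemma distribution_card_gt0 {R : realType} {S : finType} {p : S -> R} :
  distribution p -> (0 < #|S|)%N.
Proof.
move=> [_ p1]; rewrite lt0n; apply/negP => /eqP/card0_eq S0; move: p1.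
by rewrite big_pred0 => [/eqP|x]; [rewrite eq_sym oner_eq0 | exact: S0].
Qed.

Section PoissonEquation.
Context {R : realType} {S : finType} (P : S -> S -> R).
Hypotheses (P_stochastic : stochastic P) (P_irreducible : irreducible P).

Lemma mpow_ge0 k x y : 0 <= mpow P k x y.
Proof.
elim: k x y => [|k IHk] x y /=; first by rewrite ler0n.
by apply: sumr_ge0 => z _; apply: mulr_ge0 => //; apply: P_stochastic.1.
Qed.

(* Maximum principle: a maximum of a harmonic function propagates along the
   positive-probability transitions, hence by irreducibility everywhere. *)
Lemma harmonic_constant (v : S -> R) :
  (forall x, v x = \sum_y P x y * v y) -> forall x y, v x = v y.
Proof.
move=> v_harm x0 y0.
pose xm := [arg max_(x > x0) v x]%O.
have v_max y : v y <= v xm by rewrite /xm; case: arg_maxP => // x _; apply.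
have max_step z y : v z = v xm -> 0 < P z y -> v y = v xm.
  move=> vz Pzy.
  have ge0 a : predT a -> 0 <= P z a * (v z - v a).
    by rewrite mulr_ge0 ?P_stochastic.1 // subr_ge0 vz.
  have sum0 : \sum_a P z a * (v z - v a) = 0.
    under eq_bigr do rewrite mulrBr.
    by rewrite sumrB -v_harm -big_distrl /= P_stochastic.2 mul1r subrr.
  move/eqP: (psumr_eq0P ge0 sum0 isT (i := y)).
  by rewrite mulf_eq0 (gt_eqF Pzy) subr_eq0 vz => /eqP.
have reach k y : 0 < mpow P k xm y -> v y = v xm.
  elim: k y => [|k IHk] y /=; first by case: eqP => [->|_]; rewrite ?ltxx.
  move=> /lt0r_neq0/eqP pos.
  have ge0 z : predT z -> 0 <= mpow P k xm z * P z y.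
    by rewrite mulr_ge0 ?mpow_ge0 ?P_stochastic.1.
  have [z /andP[_]] := psumr_neq0P ge0 pos.
  rewrite lt_def mulf_eq0 negb_or => /andP[/andP[mz Pz] _].
  apply: (max_step z); first by apply: IHk; rewrite lt_def mz mpow_ge0.
  by rewrite lt_def Pz P_stochastic.1.
have [k xm_x0] := P_irreducible xm x0; have [k' xm_y0] := P_irreducible xm y0.
by rewrite (reach _ _ xm_x0) (reach _ _ xm_y0).
Qed.

Definition row_of (f : S -> R) : 'rV[R]_#|S| := \row_a f (enum_val a).
Definition fun_of (u : 'rV[R]_#|S|) (x : S) : R := u 0 (enum_rank x).

Lemma sum_enum_val (F : S -> R) : \sum_x F x = \sum_(a < #|S|) F (enum_val a).
Proof. by rewrite (reindex (@enum_val S predT)) //; apply/onW_bij/enum_val_bij. Qed.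

(* The transpose of [I - P] in the coordinates [enum_val], so that row
   vectors are functions on [S] and [u *m lapmx] is [u - P u]. *)
Definition lapmx : 'M[R]_#|S| :=
  \matrix_(a, b) ((a == b)%:R - P (enum_val b) (enum_val a)).

Lemma lapmxE (u : 'rV[R]_#|S|) x :
  fun_of (u *m lapmx) x = fun_of u x - \sum_y P x y * fun_of u y.
Proof.
rewrite /fun_of mxE; under eq_bigr do rewrite mxE mulrBr.
rewrite sumrB (bigD1 (enum_rank x)) //= eqxx mulr1 big1 ?addr0; last first.
  by move=> a /negPf; rewrite eq_sym => ->; rewrite mulr0.
congr (_ - _); rewrite sum_enum_val; apply: eq_bigr => a _.
by rewrite enum_rankK enum_valK mulrC.
Qed.

Lemma rank_lapmx : (0 < #|S|)%N -> \rank lapmx = #|S|.-1.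
Proof.
move=> S_gt0; pose ones : 'rV[R]_#|S| := const_mx 1.
have ker_ones : (kermx lapmx :=: ones)%MS.
  apply/eqmxP; rewrite andbC; apply/andP; split.
    apply/sub_kermxP/rowP => b; rewrite !mxE.
    under eq_bigr do rewrite !mxE mul1r.
    rewrite sumrB (bigD1 b) //= eqxx big1 ?addr0 => [|a /negPf -> //].
    by rewrite -sum_enum_val P_stochastic.2 subrr.
  apply/row_subP => a; set u := row a _.
  have /sub_kermxP uB : (u <= kermx lapmx)%MS by rewrite row_sub.
  clearbody u.
  have u_harm x : fun_of u x = \sum_y P x y * fun_of u y.
    by apply/eqP; rewrite -subr_eq0 -lapmxE uB /fun_of mxE.
  have -> : u = u 0 (Ordinal S_gt0) *: ones.
    apply/rowP => b; rewrite !mxE mulr1.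
    have := harmonic_constant _ u_harm (enum_val b) (enum_val (Ordinal S_gt0)).
    by rewrite /fun_of !enum_valK.
  exact: scalemx_sub.
have rank_ones : \rank ones = 1%N.
  rewrite rank_rV; case: eqP => // /rowP/(_ (Ordinal S_gt0))/eqP.
  by rewrite !mxE oner_eq0.
have := mxrank_ker lapmx; rewrite ker_ones rank_ones.
by have := rank_leq_row lapmx; lia.
Qed.

Definition poisson_solution (g : S -> R) : S -> R :=
  fun_of (row_of g *m pinvmx lapmx).

(* The range of [I - P] has codimension one and lies in the kernel of the
   stationary distribution, so it is exactly that kernel. *)
Lemma poisson_solutionP pi g :
  stationary P pi -> \sum_x pi x * g x = 0 ->
  forall x, g x = poisson_solution g x - \sum_y P x y * poisson_solution g y.
Proof.
move=> [pi_distr pi_stat] pi_g; have S_gt0 := distribution_card_gt0 pi_distr.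
pose piv : 'cV[R]_#|S| := \col_a pi (enum_val a).
have rank_piv : \rank piv = 1%N.
  rewrite -mxrank_tr rank_rV; case: eqP => // /rowP pi0; move: pi_distr.2.
  rewrite sum_enum_val big1 => [/eqP|a _]; first by rewrite eq_sym oner_eq0.
  by have := pi0 a; rewrite !mxE.
have lap_ker : (lapmx <= kermx piv)%MS.
  apply/sub_kermxP/colP => a; rewrite !mxE.
  under eq_bigr do rewrite !mxE mulrBl.
  rewrite sumrB (bigD1 a) //= eqxx mul1r big1 ?addr0 => [|b]; last first.
    by rewrite eq_sym => /negPf ->; rewrite mul0r.
  rewrite -{1}pi_stat sum_enum_val; apply/eqP; rewrite subr_eq0; apply/eqP.
  by apply: eq_bigr => b _; rewrite mulrC.
have ker_lap : (kermx piv <= lapmx)%MS.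
  by rewrite -(mxrank_leqif_sup lap_ker).2 rank_lapmx // mxrank_ker rank_piv subn1.
have g_lap : (row_of g <= lapmx)%MS.
  apply: submx_trans ker_lap; apply/sub_kermxP/rowP => j; rewrite !mxE.
  rewrite -[RHS]pi_g sum_enum_val; apply: eq_bigr => a _.
  by rewrite !mxE mulrC.
by move=> x; rewrite -lapmxE mulmxKpV // /fun_of mxE enum_rankK.
Qed.
End PoissonEquation.

Lemma mean_reward_centered {R : realType} {S : finType} (r pi : S -> R) :
  distribution pi -> \sum_x pi x * (r x - mean_reward r pi) = 0.
Proof.
move=> [_ pi1]; under eq_bigr do rewrite mulrBr.
rewrite sumrB -mulr_suml pi1 mul1r; apply/eqP; rewrite subr_eq0; apply/eqP.
by apply: eq_bigr => x _; rewrite mulrC.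
Qed.

Lemma poisson_telescope {R : realType} {S : finType} (Q : S -> S -> R)
    (g h : S -> R) mu (x : nat -> S) T :
  (forall a, g a - mu = h a - \sum_y Q a y * h y) ->
  \sum_(0 <= k < T) g (x k) - mu * T%:R =
  h (x 0%N) - h (x T) + \sum_(0 <= k < T) (h (x k.+1) - \sum_y Q (x k) y * h y).
Proof.
move=> g_h; rewrite mulr_natr -[X in mu *+ X]subn0 -sumr_const_nat -sumrB.
transitivity (\sum_(0 <= k < T)
    ((h (x k) - h (x k.+1)) + (h (x k.+1) - \sum_y Q (x k) y * h y))).
  by apply: eq_bigr => k _; rewrite g_h; ring.
rewrite big_split /=; congr (_ + _).
rewrite -opprB -(telescope_sumr (fun k => h (x k))) // -sumrN.
by apply: eq_bigr => k _; rewrite opprB.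
Qed.

Section Bandit.
Variables (R : realType) (K : nat) (S : 'I_K -> finType).

Section Runs.
Variables (sel : selector R K) (r : forall i, S i -> R).

Lemma runS (w : forall i, nat -> S i) t :
  run sel r w t.+1 =
  let: (T, Sm, tot) := run sel r w t in
  let A := sel t T Sm in
  (fun i => (T i + (i \in A))%N,
   fun i => Sm i + (if i \in A then r i (w i (T i)) else 0),
   tot + \sum_(i in A) r i (w i (T i))).
Proof. by []. Qed.

Lemma run_playsS w t i :
  (run sel r w t.+1).1.1 i =
  ((run sel r w t).1.1 i + (i \in sel t (run sel r w t).1.1 (run sel r w t).1.2))%N.
Proof. by rewrite runS; case: (run sel r w t) => [[T Sm] tot]. Qed.

Lemma run_plays_le w t i : ((run sel r w t).1.1 i <= t)%N.
Proof. by elim: t => [//|t IHt]; rewrite run_playsS; case: (_ \in _); lia. Qed.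

Lemma run_rewardsE w t i :
  (run sel r w t).1.2 i = \sum_(0 <= m < (run sel r w t).1.1 i) r i (w i m).
Proof.
elim: t => [|t IHt]; first by rewrite big_geq.
rewrite runS; move: IHt; case: (run sel r w t) => [[T Sm] tot] /= ->.
by case: (i \in _) => /=; rewrite ?addn0 ?addr0 // addn1 big_nat_recr.
Qed.

Lemma run_totalE w t : (run sel r w t).2 = \sum_i (run sel r w t).1.2 i.
Proof.
elim: t => [|t IHt]; first by rewrite big1.
rewrite runS; move: IHt; case: (run sel r w t) => [[T Sm] tot] /= ->.
by rewrite big_split /= -big_mkcond.
Qed.

(* [T^i(t) > k] is a stopping-time event: it only depends on the first
   [k+1] states of arm [i] and on the other arms. *)
Lemma run_prefix (w1 w2 : forall j, nat -> S j) i k :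
  (forall j m, (j != i) || (m <= k)%N -> w1 j m = w2 j m) ->
  forall t, run sel r w1 t = run sel r w2 t \/
    (k < (run sel r w1 t).1.1 i)%N /\ (k < (run sel r w2 t).1.1 i)%N.
Proof.
move=> w12; elim=> [|t [E|[k_lt1 k_lt2]]]; [by left| |]; last first.
  by right; rewrite !run_playsS; split; apply: ltn_addr.
have [/andP[i_sel k_lt]|not_past] :=
  boolP ((i \in sel t (run sel r w1 t).1.1 (run sel r w1 t).1.2) &&
         (k < (run sel r w1 t).1.1 i)%N).
  by right; rewrite !run_playsS -E i_sel; split; apply: ltn_addr.
left; rewrite !runS -E.
case: (run sel r w1 t) not_past => [[T Sm] tot] /= not_past.
have same_state j : j \in sel t T Sm -> w1 j (T j) = w2 j (T j).
  move=> j_sel; apply: w12; have [ji|//] := eqVneq j i.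
  by move: not_past; rewrite -ji j_sel /= -leqNgt.
congr (_, _, _); last by congr (_ + _); apply: eq_bigr => j /same_state ->.
apply: functional_extensionality => j.
by case: (boolP (j \in _)) => // /same_state ->.
Qed.

Lemma ltn_plays_prefix (w1 w2 : forall j, nat -> S j) i k t :
  (forall j m, (j != i) || (m <= k)%N -> w1 j m = w2 j m) ->
  (k < (run sel r w1 t).1.1 i)%N = (k < (run sel r w2 t).1.1 i)%N.
Proof. by move=> w12; case: (run_prefix w1 w2 i k w12 t) => [->|[-> ->]]. Qed.

End Runs.

Section SampleSpace.
Variable n : nat.
Local Notation Omega := (Omega S n).

Definition set_state (w : Omega) (i : 'I_K) (c : 'I_n.+1) (y : S i) : Omega :=
  [ffun j => [ffun l => match i =P j with
     | ReflectT e => if l == c then eq_rect i S y j e else w j l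
     | ReflectF _ => w j l end]].

Lemma set_state_eq w i c y : set_state w i c y i c = y.
Proof.
rewrite !ffunE; case: eqP => // e; rewrite eqxx.
by rewrite (eq_irrelevance e erefl).
Qed.

Lemma set_state_neq w i c y j l :
  (j != i) || (l != c) -> set_state w i c y j l = w j l.
Proof. by rewrite !ffunE; case: eqP => // e; subst j; rewrite eqxx /= => /negPf ->. Qed.

Lemma set_state_id w i c : set_state w i c (w i c) = w.
Proof.
apply/ffunP => j; apply/ffunP => l.
have [/set_state_neq //|] := boolP ((j != i) || (l != c)).
by rewrite negb_or !negbK => /andP[/eqP -> /eqP ->]; rewrite set_state_eq.
Qed.

Lemma set_state2 w i c y z : set_state (set_state w i c y) i c z = set_state w i c z.
Proof.
apply/ffunP => j; apply/ffunP => l.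
have [jl|] := boolP ((j != i) || (l != c)); first by rewrite !set_state_neq.
by rewrite negb_or !negbK => /andP[/eqP -> /eqP ->]; rewrite !set_state_eq.
Qed.

Lemma set_state_same w i c y l : l != c -> set_state w i c y i l = w i l.
Proof. by move=> lc; rewrite set_state_neq // lc orbT. Qed.

Lemma path_of_set_state w i (c : 'I_n.+1) y m :
  (m <= n)%N -> m != c -> path_of (set_state w i c y) i m = path_of w i m.
Proof.
move=> m_le m_c; rewrite /path_of set_state_same //.
by apply: contra m_c => /eqP <-; rewrite inordK.
Qed.

Lemma set_state_other w i c y j : j != i -> set_state w i c y j = w j.
Proof. by move=> ji; apply/ffunP => l; rewrite set_state_neq // ji. Qed.

Lemma path_probE i (init : S i -> R) (Q : S i -> S i -> R) (w : Omega) :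
  path_prob init Q (w i) =
  init (path_of w i 0) * \prod_(0 <= m < n) Q (path_of w i m) (path_of w i m.+1).
Proof.
rewrite /path_prob big_mkord /path_of; congr (init (w i _) * _).
by apply: val_inj; rewrite /= inordK.
Qed.

Lemma sum_set_state (F : Omega -> R) i c (a : S i) :
  \sum_w F w = \sum_(w : Omega) (w i c == a)%:R * \sum_b F (set_state w i c b).
Proof.
rewrite (partition_big (fun w : Omega => w i c) predT) //=.
under [RHS]eq_bigr do rewrite big_distrr.
rewrite [RHS]exchange_big /=; apply: eq_bigr => b _.
rewrite (reindex_onto (fun w => set_state w i c b) (fun w => set_state w i c a));
  last by move=> w /eqP <-; rewrite set_state2 set_state_id.
rewrite big_mkcond /=; apply: eq_bigr => w _.
rewrite set_state_eq eqxx /= set_state2.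
have [<-|wa] := eqVneq (w i c) a; first by rewrite set_state_id eqxx mul1r.
by rewrite mul0r; case: eqP => // wb; move: wa; rewrite -wb set_state_eq eqxx.
Qed.

Definition indep_of (F : Omega -> R) i c := forall (w : Omega) y, F (set_state w i c y) = F w.

Lemma indep_ofM (F G : Omega -> R) i c :
  indep_of F i c -> indep_of G i c -> indep_of (fun w => F w * G w) i c.
Proof. by move=> F_c G_c w y; rewrite F_c G_c. Qed.

Section Marginals.
Variable a0 : forall i, S i.

Lemma sum_out (Phi : Omega -> R) i c (Q : Omega -> S i -> R) q :
  indep_of Phi i c -> (forall w y, Q (set_state w i c y) = Q w) ->
  (forall w, \sum_b Q w b = q) ->
  \sum_(w : Omega) Phi w * Q w (w i c) =
  q * \sum_(w : Omega) (w i c == a0 i)%:R * Phi w.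
Proof.
move=> Phi_c Q_c Q_sum; rewrite (sum_set_state _ i c (a0 i)) big_distrr.
apply: eq_bigr => w _; under eq_bigr do rewrite Phi_c Q_c set_state_eq.
by rewrite -big_distrr Q_sum /=; ring.
Qed.

(* Summing out the states [l+1 .. l+d] of a Markov chain with kernel [Q]
   one at a time, from the last, replaces it by the chain frozen at [a0 i]. *)
Lemma sum_out_tail i (Q : S i -> S i -> R) (l d : nat) (Phi : Omega -> R) :
  stochastic Q -> (l + d <= n)%N ->
  (forall c : 'I_n.+1, (l < c <= l + d)%N -> indep_of Phi i c) ->
  \sum_(w : Omega) Phi w * \prod_(l <= m < l + d) Q (path_of w i m) (path_of w i m.+1) =
  \sum_(w : Omega) Phi w * \prod_(l <= m < l + d) (path_of w i m.+1 == a0 i)%:R.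
Proof.
move=> Q_stoch; elim: d Phi => [|d IHd] Phi ld Phi_indep.
  by apply: eq_bigr => w _; rewrite addn0 !big_geq.
set c : 'I_n.+1 := inord (l + d).+1.
have c_val : c = (l + d).+1 :> nat by rewrite /c inordK //; lia.
have Phi_c : indep_of Phi i c by apply: Phi_indep; lia.
pose Psi w := Phi w * \prod_(l <= m < l + d) Q (path_of w i m) (path_of w i m.+1).
transitivity (\sum_w Psi w * Q (path_of w i (l + d)) (w i c)).
  by apply: eq_bigr => w _; rewrite addnS big_nat_recr ?leq_addr //= mulrA.
rewrite (sum_out Psi i c (fun w b => Q (path_of w i (l + d)) b) 1); first last.
- by move=> w; apply: Q_stoch.2.
- by move=> w y; rewrite path_of_set_state ?c_val //; lia.
- apply: indep_ofM => // w y; apply: eq_big_nat => m m_lt.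
  by rewrite !path_of_set_state ?c_val //; lia.
rewrite mul1r; under eq_bigr do rewrite mulrA.
rewrite IHd; first last.
- move=> c' c'_lt; apply: indep_ofM; last by apply: Phi_indep; lia.
  move=> w y; rewrite set_state_same //.
  by apply/eqP => c_c'; move: c'_lt; rewrite -c_c' c_val; lia.
- lia.
apply: eq_bigr => w _; rewrite [in RHS]addnS [in RHS]big_nat_recr ?leq_addr //=.
by rewrite /path_of -/c; ring.
Qed.

(* The law of the path frozen at [a0 i]; it has total mass one, which is how
   the total mass of [joint_prob] is computed. *)
Definition frozen_path i (w : Omega) : R :=
  \prod_(0 <= m < n.+1) (path_of w i m == a0 i)%:R.

Lemma sum_path_prob i (init : S i -> R) (Q : S i -> S i -> R) (Phi : Omega -> R) :
  stochastic Q -> distribution init -> (forall c, indep_of Phi i c) ->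
  \sum_(w : Omega) Phi w * path_prob init Q (w i) =
  \sum_(w : Omega) Phi w * frozen_path i w.
Proof.
move=> Q_stoch init_distr Phi_indep.
pose c0 : 'I_n.+1 := ord0.
have path0 w : path_of w i 0 = w i c0.
  by rewrite /path_of; congr (w i _); apply: val_inj; rewrite /= inordK.
transitivity (\sum_(w : Omega) (Phi w * init (w i c0)) *
    \prod_(0 <= m < 0 + n) Q (path_of w i m) (path_of w i m.+1)).
  by apply: eq_bigr => w _; rewrite path_probE add0n path0 mulrA.
rewrite sum_out_tail //; last first.
  move=> c c_pos; apply: indep_ofM => // w y; rewrite set_state_same //.
  by apply/eqP => c0_c; move: c_pos; rewrite -c0_c.
transitivity (\sum_(w : Omega) (Phi w *
    \prod_(0 <= m < 0 + n) (path_of w i m.+1 == a0 i)%:R) * init (w i c0)).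
  by apply: eq_bigr => w _; rewrite mulrAC.
rewrite (sum_out _ i c0 (fun _ => init) 1) //; last by move=> _; apply: init_distr.2.
  rewrite mul1r; apply: eq_bigr => w _.
  by rewrite /frozen_path big_nat_recl // path0 add0n; ring.
apply: indep_ofM => // w y; apply: eq_big_nat => m m_lt.
by rewrite path_of_set_state.
Qed.

Lemma frozen_path_set_state w i c y j :
  j != i -> frozen_path j (set_state w i c y) = frozen_path j w.
Proof. by move=> ji; apply: eq_bigr => m _; rewrite /path_of set_state_other. Qed.

Lemma sum_prod_path_prob (init : forall j, S j -> R) (P : forall j, S j -> S j -> R)
    (s : seq 'I_K) (Phi : Omega -> R) :
  (forall j, stochastic (P j)) -> (forall j, distribution (init j)) -> uniq s ->
  (forall j c, j \in s -> indep_of Phi j c) ->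
  \sum_(w : Omega) Phi w * \prod_(j <- s) path_prob (init j) (P j) (w j) =
  \sum_(w : Omega) Phi w * \prod_(j <- s) frozen_path j w.
Proof.
move=> P_stoch init_distr; elim: s Phi => [|j s IHs] Phi.
  by move=> *; apply: eq_bigr => w _; rewrite !big_nil.
move=> /= /andP[j_s s_uniq] Phi_indep.
under eq_bigr do rewrite big_cons mulrA.
rewrite IHs //; last first.
  move=> j' c j'_s; apply: indep_ofM => [|w y].
    by apply: Phi_indep; rewrite inE j'_s orbT.
  by rewrite set_state_other //; apply: contraNneq j_s => ->.
transitivity (\sum_(w : Omega) (Phi w * \prod_(j' <- s) frozen_path j' w) *
    path_prob (init j) (P j) (w j)).
  by apply: eq_bigr => w _; rewrite mulrAC.
rewrite sum_path_prob //; last first.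
  move=> c; apply: indep_ofM => [|w y]; first by apply: Phi_indep; rewrite inE eqxx.
  apply: eq_big_seq => j' j'_s; rewrite frozen_path_set_state //.
  by apply: contraNneq j_s => <-.
by apply: eq_bigr => w _; rewrite big_cons; ring.
Qed.

Lemma sum_frozen_paths : \sum_(w : Omega) \prod_(j < K) frozen_path j w = 1.
Proof.
pose w0 : Omega := [ffun j => [ffun _ => a0 j]].
rewrite (bigD1 w0) //= [X in _ + X]big1 => [|w w_w0].
  by rewrite addr0; apply: big1 => j _; apply: big1 => m _; rewrite /path_of !ffunE eqxx.
have /existsP[j] : [exists j, exists l, w j l != a0 j].
  apply: contraNT w_w0; rewrite negb_exists => /forallP w_a0.
  apply/eqP/ffunP => j; apply/ffunP => l; rewrite !ffunE.
  by apply/eqP; move: (w_a0 j); rewrite negb_exists => /forallP/(_ l); rewrite negbK.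
move=> /existsP[l w_l]; rewrite (bigD1 j) //= /frozen_path.
have l_range : val l \in index_iota 0 n.+1 by rewrite mem_index_iota ltn_ord.
rewrite (bigD1_seq (val l) l_range (iota_uniq _ _)) /=.
by rewrite /path_of inord_val (negPf w_l) !mul0r.
Qed.

Lemma sum_joint_prob (init : forall j, S j -> R) (P : forall j, S j -> S j -> R) :
  (forall j, stochastic (P j)) -> (forall j, distribution (init j)) ->
  \sum_(w : Omega) joint_prob init P w = 1.
Proof.
move=> P_stoch init_distr.
transitivity (\sum_(w : Omega) 1 *
    \prod_(j <- index_enum 'I_K) path_prob (init j) (P j) (w j)).
  by apply: eq_bigr => w _; rewrite mul1r.
rewrite sum_prod_path_prob ?index_enum_uniq // -[RHS]sum_frozen_paths.
by apply: eq_bigr => w _; rewrite mul1r.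
Qed.

End Marginals.

Section Expectation.
Variables (init : forall j, S j -> R) (P : forall j, S j -> S j -> R).
Hypotheses (P_stoch : forall j, stochastic (P j))
           (init_distr : forall j, distribution (init j)).

(* Any state serves as the freezing point of [frozen_path]. *)
Let a0 j : S j := enum_val (Ordinal (distribution_card_gt0 (init_distr j))).

Lemma joint_prob_ge0 (w : Omega) : 0 <= joint_prob init P w.
Proof.
apply: prodr_ge0 => j _; apply: mulr_ge0; first exact: (init_distr j).1.
by apply: prodr_ge0 => m _; apply: (P_stoch j).1.
Qed.

Lemma eq_expect {f g : Omega -> R} : f =1 g -> expect init P f = expect init P g.
Proof. by move=> fg; apply: eq_bigr => w _; rewrite fg. Qed.

Lemma expectD (f g : Omega -> R) :
  expect init P (fun w => f w + g w) = expect init P f + expect init P g.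
Proof. by rewrite /expect -big_split; apply: eq_bigr => w _; rewrite mulrDr. Qed.

Lemma expect_sum (I : finType) (F : I -> Omega -> R) :
  expect init P (fun w => \sum_m F m w) = \sum_m expect init P (F m).
Proof. by rewrite /expect exchange_big; apply: eq_bigr => w _; rewrite big_distrr. Qed.

Lemma expect_abs_le (f : Omega -> R) B :
  (forall w, `|f w| <= B) -> `|expect init P f| <= B.
Proof.
move=> f_le; apply: le_trans (ler_norm_sum _ _ _) _.
rewrite -[leRHS]mul1r -(sum_joint_prob a0 init P P_stoch init_distr) big_distrl /=.
apply: ler_sum => w _; rewrite normrM ger0_norm ?joint_prob_ge0 //.
by apply: ler_wpM2l; [apply: joint_prob_ge0 | apply: f_le].
Qed.

(* Summing out the states of arm [i] after time [m+1], and then the one at time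
   [m+1], leaves [sum_b P(x_m, b) (h b - (P h)(x_m))] = 0. *)
Lemma expect_martingale_increment i (h : S i -> R) (m : 'I_n) (F : Omega -> R) :
  (forall c : 'I_n.+1, (m < c)%N -> indep_of F i c) ->
  expect init P (fun w =>
    F w * (h (path_of w i m.+1) - \sum_y P i (path_of w i m) y * h y)) = 0.
Proof.
move=> F_indep; have m_lt := ltn_ord m.
pose Phi w := F w * (\prod_(j < K | j != i) path_prob (init j) (P j) (w j)) *
  (init i (path_of w i 0) * \prod_(0 <= k < m) P i (path_of w i k) (path_of w i k.+1)).
pose Inc (w : Omega) b := P i (path_of w i m) b * (h b - \sum_y P i (path_of w i m) y * h y).
have Phi_indep (c : 'I_n.+1) : (m < c)%N -> indep_of Phi i c.
  move=> m_c; apply: indep_ofM; first apply: indep_ofM; first exact: F_indep.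
    by move=> w y; apply: eq_bigr => j ji; rewrite set_state_other.
  move=> w y; rewrite path_of_set_state //; last lia.
  by congr (_ * _); apply: eq_big_nat => k k_lt; rewrite !path_of_set_state //; lia.
transitivity (\sum_(w : Omega) (Phi w * Inc w (path_of w i m.+1)) *
    \prod_(m.+1 <= k < m.+1 + (n - m.+1)) P i (path_of w i k) (path_of w i k.+1)).
  apply: eq_bigr => w _; rewrite /joint_prob (bigD1 i) //= path_probE subnKC //.
  rewrite (big_cat_nat (leq0n m) (ltnW m_lt)) /= (big_ltn m_lt) /=.
  by rewrite /Phi /Inc; ring.
rewrite (sum_out_tail a0) ?subnKC //; last first.
  move=> c /andP[m_c _]; apply: indep_ofM; first by apply: Phi_indep; lia.
  by move=> w y; rewrite /Inc !path_of_set_state //; lia.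
set c : 'I_n.+1 := inord m.+1.
have c_val : c = m.+1 :> nat by rewrite /c inordK.
pose Frozen (w : Omega) : R := \prod_(m.+1 <= k < n) (path_of w i k.+1 == a0 i)%:R.
transitivity (\sum_(w : Omega) (Phi w * Frozen w) * Inc w (w i c)).
  by apply: eq_bigr => w _; rewrite /Frozen /path_of -/c; ring.
rewrite (sum_out a0 (fun w => Phi w * Frozen w) i c Inc 0) ?mul0r //.
- apply: indep_ofM; first by apply: Phi_indep; lia.
  move=> w y; apply: eq_big_nat => k k_lt.
  by rewrite path_of_set_state //; lia.
- move=> w y; apply: functional_extensionality => b.
  by rewrite /Inc path_of_set_state //; lia.
- move=> w; rewrite /Inc; under eq_bigr do rewrite mulrBr.
  by rewrite sumrB -big_distrl /= (P_stoch i).2 mul1r subrr.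
Qed.

Variables (sel : selector R K) (r : forall i, S i -> R).

Definition arm_reward i (w : Omega) : R := (run sel r (path_of w) n).1.2 i.

Lemma expect_arm_deviation_le i (h : S i -> R) mu :
  (forall x, r i x - mu = h x - \sum_y P i x y * h y) ->
  `|expect init P (fun w => arm_reward i w - mu * plays sel r i w)|
    <= 2 * \sum_x `|h x|.
Proof.
move=> r_h; pose T (w : Omega) := (run sel r (path_of w) n).1.1 i.
pose D (m : nat) (w : Omega) :=
  h (path_of w i m.+1) - \sum_y P i (path_of w i m) y * h y.
have decomp (w : Omega) :
    arm_reward i w - mu * plays sel r i w =
    h (path_of w i 0) - h (path_of w i (T w)) + \sum_(m < n) (m < T w)%:R * D m w.
  rewrite /arm_reward /plays run_rewardsE -/(T w) (poisson_telescope (P i) (r i) h) //.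
  congr (_ + _).
  rewrite -(big_mkord xpredT (fun m => (m < T w)%:R * D m w)).
  rewrite (big_cat_nat (leq0n (T w)) (run_plays_le _ _ _ _ _)) /= [X in _ + X]big_nat_cond.
  rewrite [X in _ + X]big1 ?addr0 => [|m /andP[/andP[T_m _] _]]; last first.
    by rewrite ltnNge T_m mul0r.
  by apply: eq_big_nat => m /andP[_ m_T]; rewrite m_T mul1r.
rewrite (eq_expect decomp) expectD expect_sum big1 ?addr0 => [|m _].
  apply: expect_abs_le => w; apply: le_trans (ler_normB _ _) _.
  have h_le a : `|h a| <= \sum_x `|h x| by rewrite (bigD1 a) //= lerDl sumr_ge0.
  by rewrite mulr2n mulrDl mul1r lerD.
apply: expect_martingale_increment => c m_c w y; congr ((_ : bool)%:R).
apply: ltn_plays_prefix => j k /orP[ji|k_m]; first by rewrite /path_of set_state_other.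
have [->|ji] := eqVneq j i; last by rewrite /path_of set_state_other.
by rewrite path_of_set_state //; move: (ltn_ord m); lia.
Qed.

Lemma regret_gap M mu :
  regret M mu init P sel r n
    - (n%:R * (\sum_(j < K | (j < M)%N) mu j)
       - \sum_i mu i * expect init P (plays sel r (n:=n) i)) =
  - \sum_i expect init P (fun w => arm_reward i w - mu i * plays sel r i w).
Proof.
have expect_gap i : expect init P (fun w => arm_reward i w - mu i * plays sel r i w)
    = expect init P (arm_reward i)
      - mu i * expect init P (plays sel r (n:=n) i).
  by rewrite /expect mulr_sumr -sumrB; apply: eq_bigr => w _; ring.
rewrite (eq_bigr _ (fun i _ => expect_gap i)).
rewrite /regret /total_reward (eq_expect (fun w => run_totalE sel r (path_of w) n)).
rewrite expect_sum sumrB; ring.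
Qed.

End Expectation.
End SampleSpace.

End Bandit.

Theorem lemma4 (R : realType) (K M : nat) (S : 'I_K -> finType)
  (P : forall i, S i -> S i -> R) (r : forall i, S i -> R)
  (pi : forall i, S i -> R) :
  (0 < M <= K)%N ->
  (forall i, stochastic (P i)) ->
  (forall i, irreducible (P i)) ->
  (forall i, aperiodic (P i)) ->
  (forall i, stationary (P i) (pi i)) ->
  (forall i j : 'I_K, (i <= j)%N ->
     mean_reward (r j) (pi j) <= mean_reward (r i) (pi i)) ->
  (forall i j : 'I_K, (i < M)%N -> (M <= j)%N ->
     mean_reward (r j) (pi j) < mean_reward (r i) (pi i)) ->
  exists C : R,
    forall (L : R), 0 < L ->
    forall (sched : 'I_K -> {set 'I_K}) (sel : selector R K),
      is_UCB_M M L sched sel ->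
    forall init : forall i, S i -> R, (forall i, distribution (init i)) ->
    forall n : nat,
      let mu := fun i => mean_reward (r i) (pi i) in
      `| regret M mu init P sel r n
         - (n%:R * (\sum_(j < K | (j < M)%N) mu j)
            - \sum_(i < K) mu i * expect init P (plays sel r (n:=n) i)) | <= C.
Proof.
move=> _ P_stoch P_irr _ pi_stat _ _.
pose h i := poisson_solution (P i) (fun x => r i x - mean_reward (r i) (pi i)).
exists (\sum_i 2 * \sum_x `|h i x|) => L _ sched sel _ init init_distr n /=.
rewrite regret_gap normrN; apply: le_trans (ler_norm_sum _ _ _) _.
apply: ler_sum => i _; apply: expect_arm_deviation_le => // x.
apply: poisson_solutionP (pi_stat i) _ x => //.
exact: mean_reward_centered (pi_stat i).1.
Qed.
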